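(* Let $\beta\in B$ be an inversion point whose left and right vectors are both equal to $(0,0,-1)\in S^2$. For $p=(a,b,c)\in\mathbb{R}^3$ put $q=a+ib\in\mathbb{C}$, and for $P=(A,B,C)$ put $Q=A+iB$; these are the orthogonal projections to the $xy$-plane, identified with $\mathbb{C}$. There is a bijection $\beta\mapsto\kappa_\beta$ from the set of such inversion points onto the set of inversions of $\mathbb{C}$, i.e. maps $z\mapsto \frac{\alpha}{z-z_0}+w_0$ with $\alpha\in\mathbb{C}^*$ and $z_0,w_0\in\mathbb{C}$. It has the following property: for all $p,P\in\mathbb{R}^3$, the pseudo spherical condition for $(p,P)$ at $\beta$ holds if and only if $q$ lies in the domain of $\kappa_\beta$ and $\kappa_\beta(q)=Q$. Likewise, consider similarity points $\beta$ whose left and right vectors both equal $(0,0,-1)$. There is a bijection $\beta\mapsto\kappa_\beta$ from the set of such points onto the set of similarities of $\mathbb{C}$, i.e. maps $z\mapsto\alpha z+\gamma$ with $\alpha\in\mathbb{C}^*$ and $\gamma\in\mathbb{C}$. It has the property that, for all $p,P\in\mathbb{R}^3$, the pseudo spherical condition for $(p,P)$ at $\beta$ holds if and only if $\kappa_\beta(q)=Q$.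
   Context: Write a direct isometry of $\mathbb{R}^3$ as $v\mapsto Mv+y$ with $M\in SO(3)$, $y\in\mathbb{R}^3$, and put $x=-M^ty$, $r=\langle y,y\rangle$. It corresponds to the point $(h:M:x:y:r)=(1:m_{11}:\dots:m_{33}:x_1:x_2:x_3:y_1:y_2:y_3:r)\in\mathbb{P}^{16}_{\mathbb{C}}$. $X$ is the complex Zariski closure of the set of all such points. Throughout, $\langle u,u'\rangle=u^tu'$ is the complex bilinear form on $\mathbb{C}^3$. The boundary is $B=X\cap\{h=0\}$. For $\beta=(0:M:x:y:r)\in B$, the matrix $M$ has rank at most $1$; put $N=rM+2yx^t$. The point $\beta$ is: - an inversion point if $M\neq0$ and $N\neq0$; - a butterfly point if $M\neq 0$ and $N=0$; - a similarity point if $M=0$, $x\neq0$ and $y\neq 0$. Left and right vectors. For a nonzero $u=(\alpha,\beta',\gamma)\in\mathbb{C}^3$ with $\langle u,u\rangle=0$, define $S(u)\in S^2$ in two steps. - First map $u$ to $\mathbb{P}^1_{\mathbb{C}}$: send it to $(\alpha-i\beta':\gamma)$ if $(i\alpha+\beta',\gamma)\neq(0,0)$, and to $(\gamma:-\alpha-i\beta')$ otherwise. - Then apply the inverse stereographic projection: $(0:1)\mapsto(0,0,1)$ and $(1:a+ib)\mapsto\frac{1}{a^2+b^2+1}(2a,2b,a^2+b^2-1)$ for $a,b\in\mathbb{R}$. For an inversion or butterfly point, write $M=vw^t$ with $v,w\in\mathbb{C}^3$ nonzero and isotropic. The left vector is $L=S(w)$ and the right vector is $R=S(v)$. For a similarity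 point, $x$ and $y$ are nonzero isotropic vectors, and $L=S(x)$, $R=S(y)$. For example, $S((1,i,0))=(0,0,-1)$. The pseudo spherical condition for $(p,P)\in\mathbb{R}^3\times\mathbb{R}^3$ at $\beta=(0:M:x:y:r)\in B$ is the (complex) equation $$r-2\langle p,x\rangle-2\langle y,P\rangle-2\langle Mp,P\rangle=0.$$ *)

From HB Require Import structures.
From mathcomp Require Import all_boot all_order all_algebra.
From mathcomp Require Import complex.
From mathcomp Require Import reals.
From mathcomp Require Import mpoly.

Set Implicit Arguments.
Unset Strict Implicit.
Unset Printing Implicit Defensive.

Import Order.TTheory GRing.Theory Num.Theory.
Local Open Scope ring_scope.
Local Open Scope complex_scope.

Section Defs.
Variable R : realType.
Local Notation C := R[i].

Definition cdot (u v : 'cV[C]_3) : C := \sum_(k < 3) u k 0 * v k 0.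

Definition isotropic (u : 'cV[C]_3) : Prop := cdot u u = 0.

Definition cvec (p : 'cV[R]_3) : 'cV[C]_3 := map_mx (fun a => a%:C) p.
Definition cmat (M : 'M[R]_3) : 'M[C]_3 := map_mx (fun a => a%:C) M.

(* a point (h : M : x : y : r) of P^16, given by homogeneous coordinates *)
Record pt := Pt { ph : C; pM : 'M[C]_3; px : 'cV[C]_3; py : 'cV[C]_3; pr : C }.

(* coordinates in the order (h, m11, m12, ..., m33, x1, x2, x3, y1, y2, y3, r) *)
Definition coords (b : pt) (k : 'I_17) : C :=
  let n := val k in
  if n == 0%N then ph b
  else if (n < 10)%N then pM b (inord ((n - 1) %/ 3)) (inord ((n - 1) %% 3))
  else if (n < 13)%N then px b (inord (n - 10)) 0
  else if (n < 16)%N then py b (inord (n - 13)) 0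
  else pr b.

Definition pt_scale (l : C) (b : pt) : pt :=
  Pt (l * ph b) (l *: pM b) (l *: px b) (l *: py b) (l * pr b).

Definition same_proj_point (b b' : pt) : Prop :=
  exists l : C, l != 0 /\ b' = pt_scale l b.

(* the point of P^16 attached to the direct isometry v |-> M v + y *)
Definition isom_pt (M : 'M[R]_3) (y : 'cV[R]_3) : pt :=
  let y' := cvec y in
  Pt 1 (cmat M) (- ((cmat M)^T *m y')) y' (cdot y' y').

Definition is_rotation (M : 'M[R]_3) : Prop := M^T *m M = 1%:M /\ \det M = 1.

(* X = complex Zariski closure in P^16 of the set of all isom_pt M y:
   a (nonzero) coordinate vector lies in X iff every homogeneous polynomial
   vanishing on all the points isom_pt M y vanishes at it. *)
Definition inX (b : pt) : Prop :=
  (exists k, coords b k != 0) /\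
  forall (d : nat) (f : {mpoly C[17]}), f \is d.-homog ->
    (forall (M : 'M[R]_3) (y : 'cV[R]_3), is_rotation M -> f.@[coords (isom_pt M y)] = 0) ->
    f.@[coords b] = 0.

Definition inB (b : pt) : Prop := inX b /\ ph b = 0.

Definition Nmat (b : pt) : 'M[C]_3 := pr b *: pM b + 2%:R *: (py b *m (px b)^T).

Definition inversion_point (b : pt) : Prop := inB b /\ pM b != 0 /\ Nmat b != 0.
Definition butterfly_point (b : pt) : Prop := inB b /\ pM b != 0 /\ Nmat b = 0.
Definition similarity_point (b : pt) : Prop :=
  inB b /\ pM b = 0 /\ px b != 0 /\ py b != 0.

(* inverse stereographic projection P^1_C -> S^2, (s : t) |-> ... *)
Definition inv_stereo (s t : C) : R * R * R :=
  if s == 0 then (0, 0, 1)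
  else let z := t / s in
       let a := complex.Re z in let b := complex.Im z in
       let n := a ^+ 2 + b ^+ 2 in
       ((2 * a) / (n + 1), (2 * b) / (n + 1), (n - 1) / (n + 1)).

Definition Smap (u : 'cV[C]_3) : R * R * R :=
  let al := u 0 0 in let be := u 1 0 in let ga := u 2%:R 0 in
  if ('i * al + be != 0) || (ga != 0) then inv_stereo (al - 'i * be) ga
  else inv_stereo ga (- al - 'i * be).

Definition left_right_ib (b : pt) (L Rv : R * R * R) : Prop :=
  exists v w : 'cV[C]_3, v != 0 /\ w != 0 /\ isotropic v /\ isotropic w /\
    pM b = v *m w^T /\ Smap w = L /\ Smap v = Rv.

Definition left_right_sim (b : pt) (L Rv : R * R * R) : Prop :=
  Smap (px b) = L /\ Smap (py b) = Rv.

Definition south : R * R * R := (0, 0, -1).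

Definition pseudo_spherical (b : pt) (p P : 'cV[R]_3) : Prop :=
  pr b - 2%:R * cdot (cvec p) (px b) - 2%:R * cdot (py b) (cvec P)
       - 2%:R * cdot (pM b *m cvec p) (cvec P) = 0.

Definition proj_xy (p : 'cV[R]_3) : C := p 0 0 +i* p 1 0.

Definition inversion_map (al z0 w0 : C) : C -> option C :=
  fun z => if z == z0 then None else Some (al / (z - z0) + w0).

Definition is_inversion (f : C -> option C) : Prop :=
  exists al z0 w0 : C, al != 0 /\ f = inversion_map al z0 w0.

Definition is_similarity (f : C -> C) : Prop :=
  exists al ga : C, al != 0 /\ f = (fun z => al * z + ga).

End Defs.

(* Write e = (1, i, 0). The quadrics h y + M x = 0, h x + M^T y = 0, <x,x> = h r and <y,y> = h r
   vanish on X, so at a boundary point M x = 0, M^T y = 0 and x, y are isotropic. An isotropic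
   vector whose image under S is (0,0,-1) is a multiple of e; hence the inversion (resp.
   similarity) points with left and right vectors (0,0,-1) are the points
   (0 : m e e^T : xi e : eta e : r) with m != 0 (resp. m = 0). At such a point the pseudo
   spherical condition reads r - 2 xi q - 2 eta Q - 2 m q Q = 0, the graph of the inversion
   Q = (r - 2 xi q) / (2 (eta + m q)), resp. of the similarity Q = (r - 2 xi q) / (2 eta), and
   two such points give the same map exactly when they are proportional.
   Conversely each of these points lies in X: it is the value at 0 of a polynomial curve whose
   values at the positive integers are multiples of points of complexified isometries, and a
   one-variable polynomial vanishing at every positive integer is zero. The same density
   argument, one complex parameter at a time, first shows that the polynomials vanishing on X
   also vanish at complexified rotations about the z-axis and complex translations. *)

From HB Require Import structures.
From mathcomp Require Import all_boot all_order all_algebra.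
From mathcomp Require Import complex reals mpoly.
From mathcomp Require Import ring lra zify.

Set Implicit Arguments.
Unset Strict Implicit.
Unset Printing Implicit Defensive.

Import Order.TTheory GRing.Theory Num.Theory.
Local Open Scope complex_scope.
Local Open Scope ring_scope.

Definition o0 : 'I_3 := @Ordinal 3 0 isT.
Definition o1 : 'I_3 := @Ordinal 3 1 isT.
Definition o2 : 'I_3 := @Ordinal 3 2 isT.

Lemma ord3P (i : 'I_3) : [\/ i = o0, i = o1 | i = o2].
Proof. by case: i => [[|[|[|//]]] ?]; [constructor 1|constructor 2|constructor 3]; apply/val_inj. Qed.

Definition col3 (K : Type) (a b c : K) : 'cV[K]_3 :=
  \col_(r < 3) match val r with 0 => a | 1 => b | _ => c end.

Definition mx3 (K : Type) (a b c d e f g h i : K) : 'M[K]_3 :=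
  \matrix_(r < 3, s < 3) match val r, val s with
   | 0, 0 => a | 0, 1 => b | 0, _ => c
   | 1, 0 => d | 1, 1 => e | 1, _ => f
   | _, 0 => g | _, 1 => h | _, _ => i end.

Lemma sum_ord3 (K : nmodType) (F : 'I_3 -> K) : \sum_(k < 3) F k = F o0 + F o1 + F o2.
Proof. by rewrite !big_ord_recl big_ord0 addr0 addrA; congr (F _ + F _ + F _); apply/val_inj. Qed.

Ltac mx3_entrywise :=
  apply/matrixP => ? ?; rewrite !mxE ?sum_ord3 ?big_ord1 ?mxE;
  repeat match goal with i : 'I_3 |- _ => case: (ord3P i) => ->; clear i end;
  rewrite ?mxE.

Section Matrix3.
Variable K : Type.

Lemma col3_eta (u : 'cV[K]_3) : u = col3 (u o0 0) (u o1 0) (u o2 0).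
Proof. by apply/matrixP => i j; rewrite !mxE (ord1 j); case: (ord3P i) => ->. Qed.

Lemma mx3_eta (A : 'M[K]_3) :
  A = mx3 (A o0 o0) (A o0 o1) (A o0 o2) (A o1 o0) (A o1 o1) (A o1 o2)
          (A o2 o0) (A o2 o1) (A o2 o2).
Proof. by mx3_entrywise. Qed.

Lemma col3E0 a b c (j : 'I_1) : @col3 K a b c o0 j = a. Proof. by rewrite mxE. Qed.
Lemma col3E1 a b c (j : 'I_1) : @col3 K a b c o1 j = b. Proof. by rewrite mxE. Qed.
Lemma col3E2 a b c (j : 'I_1) : @col3 K a b c o2 j = c. Proof. by rewrite mxE. Qed.

Lemma map_col3 (K' : Type) (f : K -> K') a b c : map_mx f (col3 a b c) = col3 (f a) (f b) (f c).
Proof. by mx3_entrywise. Qed.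

Lemma map_mx3 (K' : Type) (f : K -> K') a b c d e g h k l :
  map_mx f (mx3 a b c d e g h k l) = mx3 (f a) (f b) (f c) (f d) (f e) (f g) (f h) (f k) (f l).
Proof. by mx3_entrywise. Qed.

Lemma tr_mx3 (a b c d e f g h i : K) : (mx3 a b c d e f g h i)^T = mx3 a d g b e h c f i.
Proof. by mx3_entrywise. Qed.

End Matrix3.

Section RingMatrix3.
Variable K : comNzRingType.

Lemma mul_mx3 (a b c d e f g h i a' b' c' d' e' f' g' h' i' : K) :
  mx3 a b c d e f g h i *m mx3 a' b' c' d' e' f' g' h' i' =
  mx3 (a * a' + b * d' + c * g') (a * b' + b * e' + c * h') (a * c' + b * f' + c * i')
      (d * a' + e * d' + f * g') (d * b' + e * e' + f * h') (d * c' + e * f' + f * i')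
      (g * a' + h * d' + i * g') (g * b' + h * e' + i * h') (g * c' + h * f' + i * i').
Proof. by mx3_entrywise. Qed.

Lemma mul_mx3_col3 (a b c d e f g h i x y z : K) :
  mx3 a b c d e f g h i *m col3 x y z =
  col3 (a * x + b * y + c * z) (d * x + e * y + f * z) (g * x + h * y + i * z).
Proof. by mx3_entrywise. Qed.

Lemma mul_col3_tr (a b c x y z : K) :
  col3 a b c *m (col3 x y z)^T =
  mx3 (a * x) (a * y) (a * z) (b * x) (b * y) (b * z) (c * x) (c * y) (c * z).
Proof. by mx3_entrywise. Qed.

Lemma scale_mx3 (l a b c d e f g h i : K) :
  l *: mx3 a b c d e f g h i =
  mx3 (l * a) (l * b) (l * c) (l * d) (l * e) (l * f) (l * g) (l * h) (l * i).
Proof. by mx3_entrywise. Qed.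

Lemma scale_col3 (l a b c : K) : l *: col3 a b c = col3 (l * a) (l * b) (l * c).
Proof. by mx3_entrywise. Qed.

Lemma opp_col3 (a b c : K) : - col3 a b c = col3 (- a) (- b) (- c).
Proof. by mx3_entrywise. Qed.

Lemma mx3_1 : (1%:M : 'M[K]_3) = mx3 1 0 0 0 1 0 0 0 1.
Proof. by mx3_entrywise. Qed.

Lemma det_mx3 (a b c d e f g h i : K) :
  \det (mx3 a b c d e f g h i) = a * (e * i - f * h) - b * (d * i - f * g) + c * (d * h - e * g).
Proof.
rewrite (expand_det_row _ o0) sum_ord3 /cofactor.
rewrite !(expand_det_row _ ord0) !big_ord_recl !big_ord0 /cofactor.
rewrite !(expand_det_row _ ord0) !big_ord_recl !big_ord0 /cofactor !det_mx00 !mxE /= /bump /=.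
ring.
Qed.

End RingMatrix3.

Section PolyFun.
Variable K : comNzRingType.

Definition poly_fun (g : K -> K) := exists p : {poly K}, forall z, g z = p.[z].

Lemma poly_fun_ext g h : (forall z, g z = h z) -> poly_fun h -> poly_fun g.
Proof. by move=> E [p Hp]; exists p => z; rewrite E Hp. Qed.

Lemma poly_funC (c : K) : poly_fun (fun _ => c).
Proof. by exists c%:P => z; rewrite hornerC. Qed.

Lemma poly_fun_id : poly_fun id.
Proof. by exists 'X => z; rewrite hornerX. Qed.

Lemma poly_funD g h : poly_fun g -> poly_fun h -> poly_fun (fun z => g z + h z).
Proof. by move=> [p Hp] [q Hq]; exists (p + q) => z; rewrite hornerD Hp Hq. Qed.

Lemma poly_funN g : poly_fun g -> poly_fun (fun z => - g z).
Proof. by move=> [p Hp]; exists (- p) => z; rewrite hornerN Hp. Qed.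

Lemma poly_funM g h : poly_fun g -> poly_fun h -> poly_fun (fun z => g z * h z).
Proof. by move=> [p Hp] [q Hq]; exists (p * q) => z; rewrite hornerM Hp Hq. Qed.

Lemma poly_funXn g n : poly_fun g -> poly_fun (fun z => g z ^+ n).
Proof.
move=> Hg; elim: n => [|n IH]; first exact: poly_funC.
by apply: poly_fun_ext (poly_funM Hg IH) => z; rewrite exprS.
Qed.

Lemma poly_fun_sum (I : Type) (r : seq I) (P : pred I) (G : K -> I -> K) :
  (forall k, poly_fun (G^~ k)) -> poly_fun (fun z => \sum_(k <- r | P k) G z k).
Proof.
move=> HG; elim: r => [|a r IH]; first by apply: poly_fun_ext (poly_funC 0) => z; rewrite big_nil.
case Pa: (P a); last by apply: poly_fun_ext IH => z; rewrite big_cons Pa.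
by apply: poly_fun_ext (poly_funD (HG a) IH) => z; rewrite big_cons Pa.
Qed.

Definition poly_mx_fun m n (F : K -> 'M[K]_(m, n)) := forall i j, poly_fun (fun z => F z i j).

Lemma poly_mx_funC m n (A : 'M[K]_(m, n)) : poly_mx_fun (fun _ => A).
Proof. by move=> i j; apply: poly_funC. Qed.

Lemma poly_mx_funD m n (F G : K -> 'M[K]_(m, n)) :
  poly_mx_fun F -> poly_mx_fun G -> poly_mx_fun (fun z => F z + G z).
Proof. by move=> HF HG i j; apply: poly_fun_ext (poly_funD (HF i j) (HG i j)) => z; rewrite mxE. Qed.

Lemma poly_mx_funN m n (F : K -> 'M[K]_(m, n)) : poly_mx_fun F -> poly_mx_fun (fun z => - F z).
Proof. by move=> HF i j; apply: poly_fun_ext (poly_funN (HF i j)) => z; rewrite mxE. Qed.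

Lemma poly_mx_funZ m n g (F : K -> 'M[K]_(m, n)) :
  poly_fun g -> poly_mx_fun F -> poly_mx_fun (fun z => g z *: F z).
Proof. by move=> Hg HF i j; apply: poly_fun_ext (poly_funM Hg (HF i j)) => z; rewrite mxE. Qed.

Lemma poly_mx_funT m n (F : K -> 'M[K]_(m, n)) : poly_mx_fun F -> poly_mx_fun (fun z => (F z)^T).
Proof. by move=> HF i j; apply: poly_fun_ext (HF j i) => z; rewrite mxE. Qed.

Lemma poly_mx_funM m n p (F : K -> 'M[K]_(m, n)) (G : K -> 'M[K]_(n, p)) :
  poly_mx_fun F -> poly_mx_fun G -> poly_mx_fun (fun z => F z *m G z).
Proof.
move=> HF HG i j; apply: poly_fun_ext (poly_fun_sum _ _ (G := fun z k => F z i k * G z k j) _).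
  by move=> z; rewrite mxE.
by move=> k; apply: poly_funM.
Qed.

Lemma poly_mx_fun_col3 g h k : poly_fun g -> poly_fun h -> poly_fun k ->
  poly_mx_fun (fun z => col3 (g z) (h z) (k z)).
Proof.
move=> Hg Hh Hk i j.
by case: (ord3P i) => ->; (apply: poly_fun_ext; [move=> z; rewrite mxE /=; reflexivity | by []]).
Qed.

Lemma poly_mx_fun_mx3 a b c d e f g h k :
  poly_fun a -> poly_fun b -> poly_fun c -> poly_fun d -> poly_fun e -> poly_fun f ->
  poly_fun g -> poly_fun h -> poly_fun k ->
  poly_mx_fun (fun z => mx3 (a z) (b z) (c z) (d z) (e z) (f z) (g z) (h z) (k z)).
Proof.
move=> Ha Hb Hc Hd He Hf Hg Hh Hk i j.
by case: (ord3P i) => ->; case: (ord3P j) => ->;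
  (apply: poly_fun_ext; [move=> z; rewrite mxE /=; reflexivity | by []]).
Qed.

Lemma meval_poly n (f : {mpoly K[n]}) (v : 'I_n -> {poly K}) :
  exists G : {poly K}, forall z, f.@[fun k => (v k).[z]] = G.[z].
Proof.
exists (\sum_(m <- msupp f) (f@_m)%:P * \prod_(i < n) v i ^+ m i) => z.
rewrite mevalE -horner_evalE rmorph_sum /=; apply: eq_bigr => m _.
rewrite rmorphM /= horner_evalE hornerC rmorph_prod /=; congr (_ * _).
by apply: eq_bigr => i _; rewrite rmorphXn /= horner_evalE.
Qed.

Lemma meval_homog n d (f : {mpoly K[n]}) (c : K) (v : 'I_n -> K) :
  f \is d.-homog -> f.@[fun k => c * v k] = c ^+ d * f.@[v].
Proof.
move=> Hf; rewrite !mevalE big_distrr /=; apply: eq_big_seq => m Hm.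
rewrite mulrCA; congr (_ * _).
have <- : mdeg m = d by apply: (dhomog_mf Hf).
rewrite mdegE -prodrXr -big_split /=.
by apply: eq_bigr => i _; rewrite exprMn.
Qed.

End PolyFun.

Lemma poly_nat_roots_eq0 (K : numDomainType) (p : {poly K}) :
  (forall n : nat, p.[n.+1%:R] = 0) -> p = 0.
Proof.
move=> Hp; apply/eqP; apply/negPn/negP => nz.
pose rs := [seq (n.+1)%:R : K | n <- iota 0 (size p)].
have : (size rs < size p)%N.
  apply: max_poly_roots => //; first by apply/allP => x /mapP [n _ ->]; rewrite /root Hp.
  by rewrite map_inj_uniq ?iota_uniq // => m n /eqP; rewrite eqr_nat eqSS => /eqP.
by rewrite size_map size_iota ltnn.
Qed.

(* (a^2 + b^2) times the rotation about the z-axis through twice the argument of a + i b *)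
Definition zrot (K : nzRingType) (a b : K) : 'M[K]_3 :=
  mx3 (a ^+ 2 - b ^+ 2) (- (2%:R * a * b)) 0 (2%:R * a * b) (a ^+ 2 - b ^+ 2) 0 0 0 (a ^+ 2 + b ^+ 2).

Lemma zrot_rotation (R : realType) (a b : R) :
  a ^+ 2 + b ^+ 2 != 0 -> is_rotation ((a ^+ 2 + b ^+ 2)^-1 *: zrot a b).
Proof.
move=> nz; split; rewrite /zrot scale_mx3; last by rewrite det_mx3; field.
by rewrite tr_mx3 mul_mx3 mx3_1; congr mx3; field.
Qed.

Lemma rotationM (R : realType) (A B : 'M[R]_3) :
  is_rotation A -> is_rotation B -> is_rotation (A *m B).
Proof.
move=> [HA dA] [HB dB]; split; last by rewrite det_mulmx dA dB mulr1.
by rewrite trmx_mul mulmxA -(mulmxA _ A^T) HA mulmx1 HB.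
Qed.

Lemma poly_fun_cdot (R : realType) (u v : R[i] -> 'cV[R[i]]_3) :
  poly_mx_fun u -> poly_mx_fun v -> poly_fun (fun z => cdot (u z) (v z)).
Proof. by move=> Hu Hv; apply: poly_fun_sum => k; apply: poly_funM. Qed.

Ltac poly_fun_auto := repeat first
  [ apply: poly_funC | apply: poly_fun_id | apply: poly_funXn
  | apply: poly_funD | apply: poly_funN | apply: poly_funM | apply: poly_mx_funC
  | apply: poly_mx_funD | apply: poly_mx_funN | apply: poly_mx_funZ | apply: poly_mx_funT
  | apply: poly_mx_funM | apply: poly_mx_fun_col3 | apply: poly_mx_fun_mx3 | apply: poly_fun_cdot ].

Section Points.
Variable R : realType.
Local Notation C := R[i].

Lemma cmat_zrot (a b : R) : cmat (zrot a b) = zrot a%:C b%:C.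
Proof.
by rewrite /cmat /zrot map_mx3 /= !(rmorphD, rmorphN, rmorphM, rmorphXn, rmorph0, rmorph_nat).
Qed.

Lemma coords_scale (l : C) (b : pt R) k : coords (pt_scale l b) k = l * coords b k.
Proof.
rewrite /coords /=; case: (val k == 0)%N => //.
by case: (val k < 10)%N; [|case: (val k < 13)%N; [|case: (val k < 16)%N]]; rewrite // mxE.
Qed.

Lemma meval_scale d (f : {mpoly C[17]}) l (b : pt R) :
  f \is d.-homog -> f.@[coords (pt_scale l b)] = l ^+ d * f.@[coords b].
Proof. by move=> Hf; rewrite -meval_homog //; apply: meval_eq => k; apply: coords_scale. Qed.

Definition poly_pt (P : C -> pt R) :=
  [/\ poly_fun (fun z => ph (P z)), poly_mx_fun (fun z => pM (P z)),
      poly_mx_fun (fun z => px (P z)), poly_mx_fun (fun z => py (P z)) &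
      poly_fun (fun z => pr (P z))].

Lemma poly_fun_coords (P : C -> pt R) k : poly_pt P -> poly_fun (fun z => coords (P z) k).
Proof.
case=> Hh HM Hx Hy Hr; rewrite /coords; case: (val k == 0)%N => //.
case: (val k < 10)%N; first exact: HM.
by case: (val k < 13)%N; [exact: Hx|case: (val k < 16)%N; [exact: Hy|exact: Hr]].
Qed.

(* Zariski density of the positive integers in the complex line. *)
Lemma vanish_poly_pt (f : {mpoly C[17]}) (P : C -> pt R) : poly_pt P ->
  (forall n : nat, f.@[coords (P n.+1%:R)] = 0) -> forall z, f.@[coords (P z)] = 0.
Proof.
move=> HP Hn.
have /fin_all_exists [v Hv] : forall k, exists p : {poly C}, forall z, coords (P z) k = p.[z].
  by move=> k; apply: poly_fun_coords.
have [G HG] := meval_poly f v.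
have E z : f.@[coords (P z)] = G.[z] by rewrite -HG; apply: meval_eq => k; rewrite Hv.
have G0 : G = 0 by apply: poly_nat_roots_eq0 => n; rewrite -E Hn.
by move=> z; rewrite E G0 horner0.
Qed.

Lemma vanish_poly_pt_real (f : {mpoly C[17]}) (P : C -> pt R) : poly_pt P ->
  (forall x : R, f.@[coords (P x%:C)] = 0) -> forall z, f.@[coords (P z)] = 0.
Proof.
move=> HP Hx; apply: vanish_poly_pt => // n.
by have -> : (n.+1%:R : C) = (n.+1%:R : R)%:C by rewrite rmorph_nat.
Qed.

Definition homog_pt (h : C) (A : 'M[C]_3) (y : 'cV[C]_3) : pt R :=
  Pt h A (- (A^T *m y)) (h *: y) (h * cdot y y).

Lemma homog_pt_isom (h : C) (M : 'M[R]_3) (y : 'cV[R]_3) :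
  homog_pt h (h *: cmat M) (cvec y) = pt_scale h (isom_pt M y).
Proof. by rewrite /homog_pt /isom_pt /pt_scale /= mulr1 linearZ /= -scalemxAl scalerN. Qed.

Section Vanishing.
Variables (d : nat) (f : {mpoly C[17]}).
Hypothesis f_homog : f \is d.-homog.
Hypothesis f_isom : forall M y, is_rotation M -> f.@[coords (isom_pt M y)] = 0.

Lemma vanish_scale_isom (h : C) (M : 'M[R]_3) (y : 'cV[R]_3) : is_rotation M ->
  f.@[coords (homog_pt h (h *: cmat M) (cvec y))] = 0.
Proof. by move=> HM; rewrite homog_pt_isom (meval_scale _ _ f_homog) f_isom ?mulr0. Qed.

Lemma vanish_zrot_real (G : 'M[R]_3) (a b : R) (y : 'cV[R]_3) : is_rotation G ->
  f.@[coords (homog_pt (a%:C ^+ 2 + b%:C ^+ 2) (cmat G *m zrot a%:C b%:C) (cvec y))] = 0.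
Proof.
move=> HG; have -> : a%:C ^+ 2 + b%:C ^+ 2 = (a ^+ 2 + b ^+ 2)%:C by rewrite rmorphD !rmorphXn.
have [h0|nz] := eqVneq (a ^+ 2 + b ^+ 2) 0.
  move/eqP: (h0); rewrite paddr_eq0 ?sqr_ge0 // !sqrf_eq0 => /andP[/eqP a0 /eqP b0].
  suff -> : cmat G *m zrot a%:C b%:C = (a ^+ 2 + b ^+ 2)%:C *: cmat G by apply: vanish_scale_isom.
  by rewrite h0 a0 b0 /zrot (mx3_eta (cmat G)) mul_mx3 scale_mx3; congr mx3; ring.
suff -> : cmat G *m zrot a%:C b%:C =
    (a ^+ 2 + b ^+ 2)%:C *: cmat (G *m ((a ^+ 2 + b ^+ 2)^-1 *: zrot a b)).
  by apply: vanish_scale_isom; apply: rotationM => //; apply: zrot_rotation.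
rewrite -cmat_zrot /cmat map_mxM map_mxZ /= -scalemxAr scalerA.
by rewrite -rmorphM mulfV // rmorph1 scale1r.
Qed.

(* Each coordinate of a point of this family is a polynomial in each of a, b, y0, y1, y2, so the
   vanishing extends from real to complex values of these parameters, one variable at a time. *)
Lemma vanish_zrot (G : 'M[R]_3) (a b : C) (y : 'cV[C]_3) : is_rotation G ->
  f.@[coords (homog_pt (a ^+ 2 + b ^+ 2) (cmat G *m zrot a b) y)] = 0.
Proof.
move=> HG; rewrite (col3_eta y); move: (y o0 0) (y o1 0) (y o2 0) => z0 z1 z2.
pose P u v w0 w1 w2 := homog_pt (u ^+ 2 + v ^+ 2) (cmat G *m zrot u v) (col3 w0 w1 w2).
have real_params (u v x0 x1 x2 : R) : f.@[coords (P u%:C v%:C x0%:C x1%:C x2%:C)] = 0.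
  by rewrite /P -(map_col3 (fun x => x%:C)); apply: vanish_zrot_real.
have complex_y0 (u v x1 x2 : R) w0 : f.@[coords (P u%:C v%:C w0 x1%:C x2%:C)] = 0.
  by apply: (vanish_poly_pt_real (P := fun z => P u%:C v%:C z x1%:C x2%:C)) => [|x]; rewrite /P /zrot;
    [split; poly_fun_auto | apply: real_params].
have complex_y01 (u v x2 : R) w0 w1 : f.@[coords (P u%:C v%:C w0 w1 x2%:C)] = 0.
  by apply: (vanish_poly_pt_real (P := fun z => P u%:C v%:C w0 z x2%:C)) => [|x]; rewrite /P /zrot;
    [split; poly_fun_auto | apply: complex_y0].
have complex_y (u v : R) w0 w1 w2 : f.@[coords (P u%:C v%:C w0 w1 w2)] = 0.
  by apply: (vanish_poly_pt_real (P := P u%:C v%:C w0 w1)) => [|x]; rewrite /P /zrot;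
    [split; poly_fun_auto | apply: complex_y01].
have complex_ya (v : R) u w0 w1 w2 : f.@[coords (P u v%:C w0 w1 w2)] = 0.
  by apply: (vanish_poly_pt_real (P := fun z => P z v%:C w0 w1 w2)) => [|x]; rewrite /P /zrot;
    [split; poly_fun_auto | apply: complex_y].
by apply: (vanish_poly_pt_real (P := fun z => P a z z0 z1 z2)) => [|x]; rewrite /P /zrot;
  [split; poly_fun_auto | apply: complex_ya].
Qed.

End Vanishing.
End Points.

Section Quadrics.
Variable R : realType.
Local Notation C := R[i].
Implicit Types (b : pt R) (i j : 'I_3).

Lemma coords_h b : coords b (inord 0) = ph b.
Proof. by rewrite /coords /= inordK. Qed.

Lemma coords_M b i j : coords b (inord (1 + 3 * i + j)) = pM b i j.
Proof.
case: i j => [i lti] [j ltj]; rewrite /coords /= inordK /=; last by lia.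
rewrite ifT; last by lia.
have -> : (1 + 3 * i + j - 1 = i * 3 + j)%N by lia.
congr (pM b _ _); apply/val_inj;
  by rewrite /= inordK ?divnMDl ?modnMDl ?divn_small ?modn_small ?addn0 //; lia.
Qed.

Lemma coords_x b i : coords b (inord (10 + i)) = px b i 0.
Proof.
rewrite /coords /= inordK /=; last by case: i => [i ?] /=; lia.
rewrite !ifT; [congr (px b _ _); apply/val_inj; rewrite /= addKn inordK|..];
  by case: i => [i ?] /=; lia.
Qed.

Lemma coords_y b i : coords b (inord (13 + i)) = py b i 0.
Proof.
rewrite /coords /= inordK /=; last by case: i => [i ?] /=; lia.
rewrite !ifT; [congr (py b _ _); apply/val_inj; rewrite /= addKn inordK|..];
  by case: i => [i ?] /=; lia.
Qed.

Lemma coords_r b : coords b (inord 16) = pr b.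
Proof. by rewrite /coords /= inordK. Qed.

Definition var_h : {mpoly C[17]} := 'X_(inord 0).
Definition var_M i j : {mpoly C[17]} := 'X_(inord (1 + 3 * i + j)).
Definition var_x i : {mpoly C[17]} := 'X_(inord (10 + i)).
Definition var_y i : {mpoly C[17]} := 'X_(inord (13 + i)).
Definition var_r : {mpoly C[17]} := 'X_(inord 16).

Definition quad_hy_Mx i := var_h * var_y i + \sum_j var_M i j * var_x j.
Definition quad_hx_MTy i := var_h * var_x i + \sum_j var_M j i * var_y j.
Definition quad_xx := \sum_j var_x j * var_x j - var_h * var_r.
Definition quad_yy := \sum_j var_y j * var_y j - var_h * var_r.

Lemma dhomogX1 (k : 'I_17) : ('X_k : {mpoly C[17]}) \is 1.-homog.
Proof. by rewrite dhomogX /= mdeg1. Qed.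

Lemma dhomogXX (k l : 'I_17) : ('X_k : {mpoly C[17]}) * 'X_l \is 2.-homog.
Proof. exact: (dhomogM (dhomogX1 k) (dhomogX1 l)). Qed.

Lemma quad_hy_Mx_homog i : quad_hy_Mx i \is 2.-homog.
Proof. by rewrite rpredD ?rpred_sum // => *; apply: dhomogXX. Qed.

Lemma quad_hx_MTy_homog i : quad_hx_MTy i \is 2.-homog.
Proof. by rewrite rpredD ?rpred_sum // => *; apply: dhomogXX. Qed.

Lemma quad_xx_homog : quad_xx \is 2.-homog.
Proof. by rewrite rpredB ?rpred_sum // => *; apply: dhomogXX. Qed.

Lemma quad_yy_homog : quad_yy \is 2.-homog.
Proof. by rewrite rpredB ?rpred_sum // => *; apply: dhomogXX. Qed.

Lemma meval_quad_hy_Mx b i : (quad_hy_Mx i).@[coords b] = (ph b *: py b + pM b *m px b) i 0.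
Proof.
rewrite /quad_hy_Mx /var_h /var_M /var_x /var_y mevalD mevalM !mevalXU coords_h coords_y.
rewrite raddf_sum !mxE; congr (_ + _).
by apply: eq_bigr => j _ /=; rewrite mevalM !mevalXU coords_M coords_x.
Qed.

Lemma meval_quad_hx_MTy b i : (quad_hx_MTy i).@[coords b] = (ph b *: px b + (pM b)^T *m py b) i 0.
Proof.
rewrite /quad_hx_MTy /var_h /var_M /var_x /var_y mevalD mevalM !mevalXU coords_h coords_x.
rewrite raddf_sum !mxE; congr (_ + _).
by apply: eq_bigr => j _ /=; rewrite mevalM !mevalXU coords_M coords_y mxE.
Qed.

Lemma meval_quad_xx b : quad_xx.@[coords b] = cdot (px b) (px b) - ph b * pr b.
Proof.
rewrite /quad_xx /var_h /var_x /var_r mevalB mevalM !mevalXU coords_h coords_r raddf_sum.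
congr (_ - _).
by apply: eq_bigr => j _ /=; rewrite mevalM !mevalXU coords_x.
Qed.

Lemma meval_quad_yy b : quad_yy.@[coords b] = cdot (py b) (py b) - ph b * pr b.
Proof.
rewrite /quad_yy /var_h /var_y /var_r mevalB mevalM !mevalXU coords_h coords_r raddf_sum.
congr (_ - _).
by apply: eq_bigr => j _ /=; rewrite mevalM !mevalXU coords_y.
Qed.

Lemma cdot_trmx (u v : 'cV[C]_3) : cdot u v = (u^T *m v) 0 0.
Proof. by rewrite /cdot mxE; apply: eq_bigr => k _; rewrite mxE. Qed.

Lemma cdotNN (u v : 'cV[C]_3) : cdot (- u) (- v) = cdot u v.
Proof. by apply: eq_bigr => k _; rewrite !mxE mulrNN. Qed.

Lemma rotation_mulmx_tr (M : 'M[R]_3) : is_rotation M -> cmat M *m (cmat M)^T = 1%:M.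
Proof. by case=> H _; apply: mulmx1C; rewrite /cmat map_trmx -map_mxM H map_mx1. Qed.

Lemma quadrics_isom (M : 'M[R]_3) (y : 'cV[R]_3) : is_rotation M ->
  [/\ forall i, (quad_hy_Mx i).@[coords (isom_pt M y)] = 0,
      forall i, (quad_hx_MTy i).@[coords (isom_pt M y)] = 0,
      quad_xx.@[coords (isom_pt M y)] = 0 & quad_yy.@[coords (isom_pt M y)] = 0].
Proof.
move=> /rotation_mulmx_tr MMT; split=> [i|i||].
- by rewrite meval_quad_hy_Mx /= scale1r mulmxN mulmxA MMT mul1mx subrr mxE.
- by rewrite meval_quad_hx_MTy /= scale1r addNr mxE.
- rewrite meval_quad_xx /= cdotNN !cdot_trmx trmx_mul trmxK.
  by rewrite mulmxA -(mulmxA _ (cmat M)) MMT mulmx1 mul1r subrr.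
- by rewrite meval_quad_yy /= mul1r subrr.
Qed.

Lemma boundary_quadrics b : inB b ->
  [/\ pM b *m px b = 0, (pM b)^T *m py b = 0, isotropic (px b) & isotropic (py b)].
Proof.
case=> [[_ inXb] h0].
have [hyMx hxMTy xx yy] : [/\ forall i, (quad_hy_Mx i).@[coords b] = 0,
    forall i, (quad_hx_MTy i).@[coords b] = 0, quad_xx.@[coords b] = 0 & quad_yy.@[coords b] = 0].
  split=> [i|i||].
  - by apply: (inXb _ _ (quad_hy_Mx_homog i)) => M y /(quadrics_isom y) [].
  - by apply: (inXb _ _ (quad_hx_MTy_homog i)) => M y /(quadrics_isom y) [].
  - by apply: (inXb _ _ quad_xx_homog) => M y /(quadrics_isom y) [].
  - by apply: (inXb _ _ quad_yy_homog) => M y /(quadrics_isom y) [].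
split; rewrite /isotropic.
- by apply/matrixP => i j; rewrite (ord1 j) [RHS]mxE -(hyMx i) meval_quad_hy_Mx h0 scale0r add0r.
- by apply/matrixP => i j; rewrite (ord1 j) [RHS]mxE -(hxMTy i) meval_quad_hx_MTy h0 scale0r add0r.
- by move: xx; rewrite meval_quad_xx h0 mul0r subr0.
- by move: yy; rewrite meval_quad_yy h0 mul0r subr0.
Qed.

End Quadrics.

Section SouthPoints.
Variable R : realType.
Local Notation C := R[i].

Lemma real_sub_2i_neq0 (x : R) : x%:C - 2%:R * 'i != 0.
Proof. by apply/eqP => /eqP; rewrite eq_complex /= => /andP[_ /eqP]; lra. Qed.

Lemma cdot_col3 (a b c a' b' c' : C) :
  cdot (col3 a b c) (col3 a' b' c') = a * a' + b * b' + c * c'.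
Proof. by rewrite /cdot sum_ord3 !mxE. Qed.

Definition xflip : 'M[R]_3 := mx3 1 0 0 0 (-1) 0 0 0 (-1).

Lemma xflip_rotation : is_rotation xflip.
Proof. by split; rewrite /xflip ?det_mx3 ?tr_mx3 ?mul_mx3 ?mx3_1; [congr mx3|]; ring. Qed.

Lemma cmat_xflip : cmat xflip = mx3 1 0 0 0 (-1) 0 0 0 (-1).
Proof. by rewrite /cmat /xflip map_mx3 /= rmorphN !rmorph1 rmorph0. Qed.

Lemma rotation1 : is_rotation (1%:M : 'M[R]_3).
Proof. by split; rewrite ?trmx1 ?mulmx1 ?det1. Qed.

Definition ev : 'cV[C]_3 := col3 1 'i 0.

Lemma ev_evT : ev *m ev^T = mx3 1 'i 0 'i (-1) 0 0 0 0.
Proof.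
by rewrite /ev mul_col3_tr; congr mx3; rewrite ?mulr1 ?mul1r ?mulr0 ?mul0r // -expr2 sqrCi.
Qed.

Definition south_pt (m xi eta r : C) : pt R :=
  Pt 0 (m *: (ev *m ev^T)) (xi *: ev) (eta *: ev) r.

Lemma south_pt_scale (l m xi eta r : C) :
  pt_scale l (south_pt m xi eta r) = south_pt (l * m) (l * xi) (l * eta) (l * r).
Proof. by rewrite /pt_scale /south_pt /= mulr0 !scalerA. Qed.

Lemma inX_scale (l : C) (b : pt R) : l != 0 -> inX b -> inX (pt_scale l b).
Proof.
move=> nl [[k nk] van]; split; first by exists k; rewrite coords_scale mulf_neq0.
by move=> d f Hf Hisom; rewrite (meval_scale _ _ Hf) (van _ _ Hf Hisom) mulr0.
Qed.

(* As e -> 0 the rotation xflip * zrot 1 (e^2 - i) / (e^2 (e^2 - 2i)) degenerates, and this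
   rescaled family of isometries tends to a boundary point. *)
Definition inv_curve (eta s c2 e : C) : pt R :=
  Pt ((e ^+ 2 - 2%:R * 'i) * (1 ^+ 2 + (e ^+ 2 - 'i) ^+ 2))
     ((e ^+ 2 - 2%:R * 'i) *: (cmat xflip *m zrot 1 (e ^+ 2 - 'i)))
     (col3 (- (c2 * (2%:R + 2%:R * 'i * e ^+ 2 - (e ^+ 2) ^+ 2)) + e ^+ 2 * eta)
           (- (2%:R * 'i * c2) + 2%:R * e ^+ 2 * c2 - 'i * e ^+ 2 * eta)
           ((e ^+ 2 - 2%:R * 'i) * e * s))
     ((e ^+ 2 - 2%:R * 'i) *: col3 (eta + e ^+ 2 * c2) ('i * eta) (e * s))
     (2%:R * eta * c2 + s ^+ 2 + e ^+ 2 * c2 ^+ 2).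

Lemma inv_curve_scale (eta s c2 e : C) : e != 0 -> e ^+ 2 - 2%:R * 'i != 0 ->
  inv_curve eta s c2 e = pt_scale (e ^+ 2 - 2%:R * 'i)
    (homog_pt (1 ^+ 2 + (e ^+ 2 - 'i) ^+ 2) (cmat xflip *m zrot 1 (e ^+ 2 - 'i))
       ((1 ^+ 2 + (e ^+ 2 - 'i) ^+ 2)^-1 *: col3 (eta + e ^+ 2 * c2) ('i * eta) (e * s))).
Proof.
move=> ne nm; have Hi := @sqrCi C.
have Eh : 1 ^+ 2 + (e ^+ 2 - 'i) ^+ 2 = e ^+ 2 * (e ^+ 2 - 2%:R * 'i) :> C by ring: Hi.
rewrite /inv_curve /pt_scale /homog_pt /=; congr Pt.
- rewrite cmat_xflip /zrot mul_mx3 tr_mx3 scale_col3 mul_mx3_col3 opp_col3 scale_col3 Eh.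
  by congr col3; field: Hi; rewrite nm ne.
- by rewrite !scalerA mulfK // Eh mulf_neq0 // expf_neq0.
- by rewrite scale_col3 cdot_col3 Eh; field: Hi; rewrite nm ne.
Qed.

Lemma inv_curve0 (eta s c2 : C) : inv_curve eta s c2 0 =
  south_pt (- (4%:R * 'i)) (- (2%:R * c2)) (- (2%:R * 'i * eta)) (2%:R * eta * c2 + s ^+ 2).
Proof.
have Hi := @sqrCi C; rewrite /inv_curve /south_pt ev_evT; congr Pt.
- by ring: Hi.
- by rewrite cmat_xflip /zrot mul_mx3 !scale_mx3; congr mx3; ring: Hi.
- by rewrite /ev scale_col3; congr col3; ring: Hi.
- by rewrite /ev !scale_col3; congr col3; ring: Hi.
- by ring.
Qed.

Definition sim_curve (a b eta w e : C) : pt R :=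
  Pt (e * (a ^+ 2 + b ^+ 2)) (e *: zrot a b)
     (- ((zrot a b)^T *m col3 (eta + e * w) ('i * eta) 0))
     ((a ^+ 2 + b ^+ 2) *: col3 (eta + e * w) ('i * eta) 0)
     ((a ^+ 2 + b ^+ 2) * (2%:R * eta * w + e * w ^+ 2)).

Lemma sim_curve_scale (a b eta w e : C) : e != 0 ->
  sim_curve a b eta w e = pt_scale e (homog_pt (a ^+ 2 + b ^+ 2) (cmat 1%:M *m zrot a b)
     (e^-1 *: col3 (eta + e * w) ('i * eta) 0)).
Proof.
move=> ne; have Hi := @sqrCi C.
rewrite /sim_curve /pt_scale /homog_pt /cmat map_mx1 mul1mx /=; congr Pt.
- by rewrite -scalemxAr scalerN scalerA mulfV // scale1r.
- by rewrite !scalerA; congr (_ *: _); field.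
- by rewrite scale_col3 cdot_col3; field: Hi.
Qed.

Lemma sim_curve0 (a b eta w : C) : sim_curve a b eta w 0 =
  south_pt 0 (- ((a + 'i * b) ^+ 2 * eta)) ((a ^+ 2 + b ^+ 2) * eta)
    ((a ^+ 2 + b ^+ 2) * (2%:R * eta * w)).
Proof.
have Hi := @sqrCi C; rewrite /sim_curve /south_pt; congr Pt.
- by rewrite mul0r.
- by rewrite !scale0r.
- by rewrite /zrot tr_mx3 mul_mx3_col3 opp_col3 /ev scale_col3; congr col3; ring: Hi.
- by rewrite /ev !scale_col3; congr col3; ring: Hi.
- by ring.
Qed.

Lemma south_pt_M00 (m xi eta r : C) : pM (south_pt m xi eta r) o0 o0 = m.
Proof. by rewrite /= ev_evT !mxE /= mulr1. Qed.

Lemma south_pt_x0 (m xi eta r : C) : px (south_pt m xi eta r) o0 0 = xi.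
Proof. by rewrite /= !mxE /= mulr1. Qed.

Lemma south_pt_y0 (m xi eta r : C) : py (south_pt m xi eta r) o0 0 = eta.
Proof. by rewrite /= !mxE /= mulr1. Qed.

Section Vanishing.
Variables (d : nat) (f : {mpoly C[17]}).
Hypothesis f_homog : f \is d.-homog.
Hypothesis f_isom : forall M y, is_rotation M -> f.@[coords (isom_pt M y)] = 0.

Lemma vanish_south_inv (eta s c2 : C) : f.@[coords
  (south_pt (- (4%:R * 'i)) (- (2%:R * c2)) (- (2%:R * 'i * eta)) (2%:R * eta * c2 + s ^+ 2))] = 0.
Proof.
rewrite -inv_curve0; apply: (vanish_poly_pt (P := inv_curve eta s c2)) => [|n].
  by rewrite /inv_curve /zrot; split; poly_fun_auto.
have n_neq0 : (n.+1%:R : C) != 0 by rewrite pnatr_eq0.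
have nm : (n.+1%:R : C) ^+ 2 - 2%:R * 'i != 0.
  by rewrite -(rmorph_nat (@real_complex R)) -rmorphXn real_sub_2i_neq0.
rewrite inv_curve_scale // (meval_scale _ _ f_homog) (vanish_zrot f_homog f_isom) ?mulr0 //.
exact: xflip_rotation.
Qed.

Lemma vanish_south_sim (a b eta w : C) : f.@[coords (south_pt 0 (- ((a + 'i * b) ^+ 2 * eta))
  ((a ^+ 2 + b ^+ 2) * eta) ((a ^+ 2 + b ^+ 2) * (2%:R * eta * w)))] = 0.
Proof.
rewrite -sim_curve0; apply: (vanish_poly_pt (P := sim_curve a b eta w)) => [|n].
  by rewrite /sim_curve /zrot; split; poly_fun_auto.
rewrite sim_curve_scale ?pnatr_eq0 // (meval_scale _ _ f_homog).
by rewrite (vanish_zrot f_homog f_isom) ?mulr0 //; exact: rotation1.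
Qed.

End Vanishing.

Lemma inX_south_inv (m xi eta r : C) : m != 0 -> inX (south_pt m xi eta r).
Proof.
move=> nm; have ni := neq0Ci C.
have n2 : (2%:R : C) != 0 by rewrite pnatr_eq0.
have n4 : (4%:R : C) != 0 by rewrite pnatr_eq0.
pose l := m / - (4%:R * 'i).
have nl : l != 0 by rewrite mulf_neq0 ?invr_eq0 ?oppr_eq0 ?mulf_neq0.
pose c2 := - (xi / (2%:R * l)); pose eta0 := - (eta / (2%:R * 'i * l)).
pose s := sqrtC (r / l - 2%:R * eta0 * c2).
suff -> : south_pt m xi eta r = pt_scale l
  (south_pt (- (4%:R * 'i)) (- (2%:R * c2)) (- (2%:R * 'i * eta0)) (2%:R * eta0 * c2 + s ^+ 2)).
  apply: inX_scale => //; split; last by move=> d f Hf Hisom; apply: (vanish_south_inv Hf Hisom).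
  exists (inord (1 + 3 * o0 + o0)); rewrite coords_M south_pt_M00.
  by rewrite oppr_eq0 mulf_neq0.
rewrite south_pt_scale /s sqrtCK /c2 /eta0 /l; congr south_pt; field; by rewrite ?nm ?ni ?n2 ?n4.
Qed.

Lemma inX_south_sim (xi eta r : C) : xi != 0 -> eta != 0 -> inX (south_pt 0 xi eta r).
Proof.
move=> nxi neta; have Hi := @sqrCi C.
have n2 : (2%:R : C) != 0 by rewrite pnatr_eq0.
pose c := - (eta / xi); pose a := (1 + c) / 2%:R; pose b := - ('i * (1 - c)) / 2%:R.
have Ea : a + 'i * b = 1 by rewrite /a /b; field: Hi.
have Eh : a ^+ 2 + b ^+ 2 = c by rewrite /a /b; field: Hi.
pose w := r / (2%:R * eta).
suff -> : south_pt 0 xi eta r = pt_scale (- xi)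
  (south_pt 0 (- ((a + 'i * b) ^+ 2 * 1)) ((a ^+ 2 + b ^+ 2) * 1)
     ((a ^+ 2 + b ^+ 2) * (2%:R * 1 * w))).
  apply: inX_scale; first by rewrite oppr_eq0.
  split; last by move=> d f Hf Hisom; apply: (vanish_south_sim Hf Hisom).
  exists (inord (13 + o0)); rewrite coords_y south_pt_y0 Eh mulr1.
  by rewrite oppr_eq0 mulf_neq0 ?invr_eq0.
rewrite south_pt_scale Ea Eh /c /w mulr0; congr south_pt; field; by rewrite ?nxi ?neta ?n2.
Qed.

End SouthPoints.
Arguments ev {R}.

Section NormalForms.
Variable R : realType.
Local Notation C := R[i].

Lemma inv_stereo_south (s t : C) : inv_stereo s t = south R -> s != 0 /\ t = 0.
Proof.
rewrite /inv_stereo /south; case: eqP => [_ [] E|/eqP ns]; first by exfalso; lra.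
case=> _ _; set z := t / s; set n := complex.Re z ^+ 2 + complex.Im z ^+ 2.
have n_ge0 : 0 <= n by rewrite addr_ge0 ?sqr_ge0.
have n1 : n + 1 != 0 by rewrite gt_eqF // ltr_wpDl.
move=> /(congr1 (fun x => x * (n + 1))); rewrite divfK // mulN1r => E.
have : n == 0 by apply/eqP; lra.
rewrite /n paddr_eq0 ?sqr_ge0 // !sqrf_eq0 => /andP [/eqP re /eqP im].
have : z == 0 by rewrite [z]complexE re im mulr0 addr0.
by rewrite mulf_eq0 invr_eq0 (negbTE ns) orbF => /eqP.
Qed.

Lemma Smap_col3 (a b c : C) : Smap (col3 a b c) =
  if ('i * a + b != 0) || (c != 0) then inv_stereo (a - 'i * b) c else inv_stereo c (- a - 'i * b).
Proof.
rewrite /Smap; have -> : (2%:R : 'I_3) = o2 by apply/val_inj.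
have -> : (1 : 'I_3) = o1 by apply/val_inj.
have -> : (0 : 'I_3) = o0 by apply/val_inj.
by rewrite col3E0 col3E1 col3E2.
Qed.

Lemma isotropic_ev (x0 x1 x2 : C) : x0 + 'i * x1 = 0 -> isotropic (col3 x0 x1 x2) ->
  col3 x0 x1 x2 = x0 *: ev.
Proof.
rewrite /isotropic cdot_col3 => /eqP; rewrite addr_eq0 => /eqP E0 iso; have Hi := @sqrCi C.
have E1 : x1 = 'i * x0 by rewrite E0 mulrN mulrA -expr2 Hi mulN1r opprK.
have : x2 ^+ 2 = 0 by rewrite -iso E1; ring: Hi.
move/eqP; rewrite expf_eq0 => /andP[_ /eqP ->].
by rewrite /ev scale_col3 mulr1 mulr0 E1 mulrC.
Qed.

Lemma Smap_south (u : 'cV[C]_3) : isotropic u -> Smap u = south R ->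
  u = u o0 0 *: ev /\ u o0 0 != 0.
Proof.
have Hi := @sqrCi C; rewrite (col3_eta u) col3E0 Smap_col3.
move: (u o0 0) (u o1 0) (u o2 0) => a b c iso.
case: ifP => [_ /inv_stereo_south [ns c0]|/negbT]; last first.
  by rewrite negb_or !negbK => /andP[_ /eqP ->] /inv_stereo_south[/eqP].
have Hab : a + 'i * b = 0.
  apply/eqP; rewrite -(mulIr_eq0 _ (rregP ns)) -subr_eq0 subr0; apply/eqP.
  by move: iso; rewrite /isotropic cdot_col3 c0 => <-; ring: Hi.
split; first exact: isotropic_ev.
apply: contra ns => /eqP a0; move/eqP: Hab.
rewrite a0 add0r mulf_eq0 (negbTE (neq0Ci C)) /= => /eqP ->.
by rewrite mulr0 subr0.
Qed.

Lemma Smap_ev (a : C) : a != 0 -> Smap (a *: ev) = south R.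
Proof.
move=> na; have Hi := @sqrCi C; have n2 : (2%:R : C) != 0 by rewrite pnatr_eq0.
rewrite /ev scale_col3 mulr1 mulr0 Smap_col3.
have -> : 'i * a + a * 'i = 2%:R * 'i * a by ring.
rewrite !mulf_neq0 ?neq0Ci //=.
have -> : a - 'i * (a * 'i) = 2%:R * a by ring: Hi.
rewrite /inv_stereo mulf_eq0 (negbTE n2) (negbTE na) /= mul0r /=.
by rewrite /south !expr0n /= !(mulr0, mul0r, addr0, add0r, sub0r, divr1).
Qed.

Lemma pt_eta (b : pt R) : b = Pt (ph b) (pM b) (px b) (py b) (pr b).
Proof. by case: b. Qed.

Lemma scale_ev_neq0 (a : C) : a != 0 -> a *: ev != 0 :> 'cV[C]_3.
Proof.
move=> na; apply: contra na => /eqP/(congr1 (fun u : 'cV[C]_3 => u o0 0)).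
by rewrite !mxE /= mulr1 => ->.
Qed.

Lemma scale_ev_evT_neq0 (a : C) : a != 0 -> a *: (ev *m ev^T) != 0 :> 'M[C]_3.
Proof.
move=> na; apply: contra na => /eqP/(congr1 (fun A : 'M[C]_3 => A o0 o0)).
by rewrite ev_evT !mxE /= mulr1 => ->.
Qed.

Lemma isotropic_scale_ev (a : C) : isotropic (a *: ev).
Proof. by rewrite /isotropic /ev scale_col3 cdot_col3; ring: (@sqrCi C). Qed.

Lemma Nmat_south_pt (m xi eta r : C) :
  Nmat (south_pt m xi eta r) = (r * m + 2%:R * xi * eta) *: (ev *m ev^T).
Proof.
rewrite /Nmat /= [(_ *: ev)^T]linearZ /= -scalemxAl -scalemxAr !scalerA -scalerDl.
by congr (_ *: _); ring.
Qed.

Lemma ker_ev_evT_isotropic (m : C) (x : 'cV[C]_3) : m != 0 ->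
  (m *: (ev *m ev^T)) *m x = 0 -> isotropic x -> x = x o0 0 *: ev.
Proof.
move=> nm; rewrite (col3_eta x) col3E0 ev_evT scale_mx3 mul_mx3_col3.
move=> /(congr1 (fun u : 'cV[C]_3 => u o0 0)).
rewrite col3E0 mxE => E; apply: isotropic_ev; apply: (mulfI nm); rewrite mulr0 -E; ring.
Qed.

Lemma inversion_point_south b : inversion_point b -> left_right_ib b (south R) (south R) ->
  exists m xi eta r, [/\ m != 0, r * m + 2%:R * xi * eta != 0 & b = south_pt m xi eta r].
Proof.
move=> [Bb [_ Nnz]] [v [w [_ [_ [iv [iw [HM [Sw Sv]]]]]]]].
have [Ev v0] := Smap_south iv Sv; have [Ew w0] := Smap_south iw Sw.
have : pM b = (v o0 0 * w o0 0) *: (ev *m ev^T).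
  by rewrite HM {1}Ev {1}Ew [(_ *: ev)^T]linearZ /= -scalemxAl -scalemxAr scalerA.
move: (mulf_neq0 v0 w0); move: (v o0 0 * w o0 0) => m nm EM.
have [Mx MTy isox isoy] := boundary_quadrics Bb.
have Ex := ker_ev_evT_isotropic nm (etrans (congr1 (mulmx^~ _) (esym EM)) Mx) isox.
have Ey : py b = py b o0 0 *: ev.
  apply: (ker_ev_evT_isotropic nm) isoy; rewrite -MTy EM linearZ /= trmx_mul trmxK //.
have Eb : b = south_pt m (px b o0 0) (py b o0 0) (pr b).
  by rewrite [LHS]pt_eta Bb.2 EM {1}Ex {1}Ey.
exists m, (px b o0 0), (py b o0 0), (pr b); split => //.
by apply: contra Nnz => /eqP N0; rewrite Eb Nmat_south_pt N0 scale0r.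
Qed.

Lemma similarity_point_south b : similarity_point b -> left_right_sim b (south R) (south R) ->
  exists xi eta r, [/\ xi != 0, eta != 0 & b = south_pt 0 xi eta r].
Proof.
case=> [Bb [M0 _]] [Sx Sy]; have [_ _ isox isoy] := boundary_quadrics Bb.
have [Ex x0] := Smap_south isox Sx; have [Ey y0] := Smap_south isoy Sy.
exists (px b o0 0), (py b o0 0), (pr b); split => //.
by rewrite [LHS]pt_eta Bb.2 M0 {1}Ex {1}Ey /south_pt scale0r.
Qed.

Lemma south_pt_inversion_point (m xi eta r : C) : m != 0 -> r * m + 2%:R * xi * eta != 0 ->
  inversion_point (south_pt m xi eta r) /\ left_right_ib (south_pt m xi eta r) (south R) (south R).
Proof.
move=> nm nN; split; first split.
- by split; [apply: inX_south_inv | ].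
- by split; [apply: scale_ev_evT_neq0 | rewrite Nmat_south_pt scale_ev_evT_neq0].
have n1 : (1 : C) != 0 := oner_neq0 C.
exists (m *: ev), (1 *: ev).
do 2 (split; first exact: scale_ev_neq0); do 2 (split; first exact: isotropic_scale_ev).
split; last by split; apply: Smap_ev.
by rewrite [(_ *: ev)^T]linearZ /= -scalemxAl -scalemxAr scalerA mulr1.
Qed.

Lemma south_pt_similarity_point (xi eta r : C) : xi != 0 -> eta != 0 ->
  similarity_point (south_pt 0 xi eta r) /\ left_right_sim (south_pt 0 xi eta r) (south R) (south R).
Proof.
move=> nxi neta; split; last by split; apply: Smap_ev.
split; first by split; [apply: inX_south_sim|].
by rewrite /= scale0r !scale_ev_neq0.
Qed.

End NormalForms.

Section Kappa.
Variable R : realType.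
Local Notation C := R[i].
Local Notation south := (south R).

Lemma inversion_map_inj (al z0 w0 al' z0' w0' : C) :
  inversion_map al z0 w0 = inversion_map al' z0' w0' -> [/\ al = al', z0 = z0' & w0 = w0'].
Proof.
move=> E; have Ez : z0 = z0'.
  by have := congr1 (fun g => g z0) E; rewrite /inversion_map eqxx; case: eqP.
subst z0'; have n2 : (2%:R : C) != 0 by rewrite pnatr_eq0.
have shift c : c != 0 -> (z0 + c == z0) = false.
  by move=> nc; apply/negbTE; rewrite -subr_eq0 addrAC subrr add0r.
have := congr1 (fun g => g (z0 + 1)) E; have := congr1 (fun g => g (z0 + -1)) E.
rewrite /inversion_map !shift ?oppr_eq0 ?oner_eq0 // => -[Em1] [E1].
have addK c : z0 + c - z0 = c by rewrite addrAC subrr add0r.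
move: Em1 E1; rewrite !addK !divr1 invrN1 => Em1 E1.
have : (al - al') * 2%:R = (al + w0 - (al' + w0')) - (al * -1 + w0 - (al' * -1 + w0')) by ring.
rewrite E1 Em1 !subrr => /eqP; rewrite mulf_eq0 (negbTE n2) orbF subr_eq0 => /eqP Ea.
by split => //; move: E1; rewrite Ea => /addrI.
Qed.

Definition inversion_of (m xi eta r : C) : C -> option C :=
  inversion_map ((r * m + 2%:R * xi * eta) / (2%:R * m ^+ 2)) (- (eta / m)) (- (xi / m)).

Definition similarity_of (xi eta r : C) : C -> C := fun z => - (xi / eta) * z + r / (2%:R * eta).

Definition kappa_inv (b : pt R) : C -> option C :=
  inversion_of (pM b o0 o0) (px b o0 0) (py b o0 0) (pr b).

Definition kappa_sim (b : pt R) : C -> C := similarity_of (px b o0 0) (py b o0 0) (pr b).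

Lemma kappa_inv_south (m xi eta r : C) : kappa_inv (south_pt m xi eta r) = inversion_of m xi eta r.
Proof. by rewrite /kappa_inv south_pt_M00 south_pt_x0 south_pt_y0. Qed.

Lemma kappa_sim_south (xi eta r : C) : kappa_sim (south_pt 0 xi eta r) = similarity_of xi eta r.
Proof. by rewrite /kappa_sim south_pt_x0 south_pt_y0. Qed.

(* Division by zero yields zero, so no hypothesis on m or eta is needed. *)
Lemma inversion_of_scale (l m xi eta r : C) : l != 0 ->
  inversion_of (l * m) (l * xi) (l * eta) (l * r) = inversion_of m xi eta r.
Proof.
move=> nl; rewrite /inversion_of; have [->|nm] := eqVneq m 0.
  by rewrite !(mulr0, expr0n, invr0).
by congr inversion_map; field; rewrite ?nl ?nm.
Qed.

Lemma similarity_of_scale (l xi eta r : C) : l != 0 ->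
  similarity_of (l * xi) (l * eta) (l * r) = similarity_of xi eta r.
Proof.
move=> nl; rewrite /similarity_of; have [->|ne] := eqVneq eta 0; first by rewrite !(mulr0, invr0).
have n2 : (2%:R : C) != 0 by rewrite pnatr_eq0.
have -> : l * xi / (l * eta) = xi / eta by field; rewrite ?nl ?ne.
by have -> : l * r / (2%:R * (l * eta)) = r / (2%:R * eta) by field; rewrite ?nl ?ne ?n2.
Qed.

Lemma kappa_inv_scale (l : C) (b : pt R) : l != 0 -> kappa_inv (pt_scale l b) = kappa_inv b.
Proof. by move=> nl; rewrite /kappa_inv /pt_scale /= !mxE inversion_of_scale. Qed.

Lemma kappa_sim_scale (l : C) (b : pt R) : l != 0 -> kappa_sim (pt_scale l b) = kappa_sim b.
Proof. by move=> nl; rewrite /kappa_sim /pt_scale /= !mxE similarity_of_scale. Qed.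

Lemma inversion_of_inj (m xi eta r m' xi' eta' r' : C) : m != 0 -> m' != 0 ->
  inversion_of m xi eta r = inversion_of m' xi' eta' r' ->
  south_pt m' xi' eta' r' = pt_scale (m' / m) (south_pt m xi eta r).
Proof.
move=> nm nm' /inversion_map_inj [Ha /oppr_inj Hz /oppr_inj Hw].
have n2 : (2%:R : C) != 0 by rewrite pnatr_eq0.
have Exi : xi' = m' / m * xi by rewrite -[xi'](divfK nm') -Hw; field.
have Eeta : eta' = m' / m * eta by rewrite -[eta'](divfK nm') -Hz; field.
have Er : r' = m' / m * r.
  have -> : r' = ((r' * m' + 2%:R * xi' * eta') / (2%:R * m' ^+ 2) * (2%:R * m' ^+ 2)
                  - 2%:R * xi' * eta') / m' by field; rewrite ?nm' ?n2.
  by rewrite -Ha Exi Eeta; field; rewrite ?nm ?nm' ?n2.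
by rewrite south_pt_scale divfK // Exi Eeta Er.
Qed.

Lemma similarity_of_inj (xi eta r xi' eta' r' : C) : eta != 0 -> eta' != 0 ->
  similarity_of xi eta r = similarity_of xi' eta' r' ->
  south_pt 0 xi' eta' r' = pt_scale (eta' / eta) (south_pt 0 xi eta r).
Proof.
move=> ne ne' E; have n2 : (2%:R : C) != 0 by rewrite pnatr_eq0.
have := congr1 (fun g => g 0) E; have := congr1 (fun g => g 1) E.
rewrite /similarity_of !mulr0 !add0r !mulr1 => E1 E0; move: E1; rewrite E0 => /addIr/oppr_inj E1.
rewrite south_pt_scale mulr0; congr south_pt.
- by rewrite -[xi'](divfK ne') -E1; field; rewrite ?ne.
- by rewrite divfK.
- by rewrite -[r'](divfK (mulf_neq0 n2 ne')) -E0; field; rewrite ?ne ?n2.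
Qed.

Lemma pseudo_spherical_south (m xi eta r : C) (p P : 'cV[R]_3) :
  pseudo_spherical (south_pt m xi eta r) p P <->
  r - 2%:R * xi * proj_xy p - 2%:R * eta * proj_xy P - 2%:R * m * (proj_xy p * proj_xy P) = 0.
Proof.
have projE (a b : R) : (a +i* b) = a%:C + 'i * b%:C.
  by apply/eqP; rewrite eq_complex /= !(mul0r, mul1r, subr0, addr0, add0r) !eqxx.
rewrite /pseudo_spherical /proj_xy /= !projE.
have -> : (0 : 'I_3) = o0 by apply/val_inj.
have -> : (1 : 'I_3) = o1 by apply/val_inj.
rewrite (col3_eta p) (col3_eta P) /cvec !map_col3 !col3E0 !col3E1.
rewrite ev_evT /ev !scale_col3 scale_mx3 mul_mx3_col3 !cdot_col3.
by split=> H; rewrite -[RHS]H; ring: (@sqrCi C).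
Qed.

Lemma inversion_of_graph (m xi eta r q Q : C) : m != 0 -> r * m + 2%:R * xi * eta != 0 ->
  r - 2%:R * xi * q - 2%:R * eta * Q - 2%:R * m * (q * Q) = 0 <-> inversion_of m xi eta r q = Some Q.
Proof.
move=> nm nN; have n2 : (2%:R : C) != 0 by rewrite pnatr_eq0.
rewrite /inversion_of /inversion_map; case: eqP => [Hq|/eqP Hq].
  split => // H; exfalso; move/eqP: nN; apply.
  have -> : r * m + 2%:R * xi * eta = m * (r - 2%:R * xi * q - 2%:R * eta * Q - 2%:R * m * (q * Q)).
    by rewrite Hq; field; rewrite ?nm.
  by rewrite H mulr0.
have Eq : q - - (eta / m) = (eta + m * q) / m by field; rewrite ?nm.
have nD : eta + m * q != 0.
  by apply: contra Hq => /eqP H; rewrite -subr_eq0 Eq H mul0r.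
rewrite Eq; split => [H|[<-]]; last by field; rewrite ?nD ?nm ?n2.
congr Some; apply/eqP; rewrite -subr_eq0; apply/eqP.
transitivity ((r - 2%:R * xi * q - 2%:R * eta * Q - 2%:R * m * (q * Q)) / (2%:R * (eta + m * q))).
  by field; rewrite ?nD ?nm ?n2.
by rewrite H mul0r.
Qed.

Lemma similarity_of_graph (xi eta r q Q : C) : eta != 0 ->
  r - 2%:R * xi * q - 2%:R * eta * Q = 0 <-> similarity_of xi eta r q = Q.
Proof.
move=> ne; have n2 : (2%:R : C) != 0 by rewrite pnatr_eq0.
rewrite /similarity_of; split => [H|<-]; last by field; rewrite ?ne ?n2.
apply/eqP; rewrite -subr_eq0; apply/eqP.
transitivity ((r - 2%:R * xi * q - 2%:R * eta * Q) / (2%:R * eta)); first by field; rewrite ?ne ?n2.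
by rewrite H mul0r.
Qed.

Lemma kappa_inv_inversion (b : pt R) : inversion_point b -> left_right_ib b south south ->
  is_inversion (kappa_inv b).
Proof.
move=> Hb Hlr; have [m [xi [eta [r [nm nN ->]]]]] := inversion_point_south Hb Hlr.
rewrite kappa_inv_south.
exists ((r * m + 2%:R * xi * eta) / (2%:R * m ^+ 2)), (- (eta / m)), (- (xi / m)).
by split => //; rewrite mulf_neq0 // invr_neq0 // mulf_neq0 ?pnatr_eq0 // expf_neq0.
Qed.

Lemma kappa_inv_eq (b b' : pt R) :
  inversion_point b -> left_right_ib b south south ->
  inversion_point b' -> left_right_ib b' south south ->
  kappa_inv b = kappa_inv b' <-> same_proj_point b b'.
Proof.
move=> Hb Hlr Hb' Hlr'; split; last by case=> l [nl ->]; rewrite kappa_inv_scale.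
have [m [xi [eta [r [nm _ ->]]]]] := inversion_point_south Hb Hlr.
have [m' [xi' [eta' [r' [nm' _ ->]]]]] := inversion_point_south Hb' Hlr'.
rewrite !kappa_inv_south => /inversion_of_inj E.
by exists (m' / m); split; [rewrite mulf_neq0 ?invr_eq0 | exact: E].
Qed.

Lemma kappa_inv_onto (f : C -> option C) : is_inversion f ->
  exists b, inversion_point b /\ left_right_ib b south south /\ kappa_inv b = f.
Proof.
case=> al [z0 [w0 [nal ->]]]; have n2 : (2%:R : C) != 0 by rewrite pnatr_eq0.
have nN : (2%:R * al - 2%:R * w0 * z0) * 1 + 2%:R * - w0 * - z0 != 0.
  by rewrite (_ : _ + _ = 2%:R * al) ?mulf_neq0 //; ring.
have [Hb Hlr] := south_pt_inversion_point (oner_neq0 C) nN.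
exists (south_pt 1 (- w0) (- z0) (2%:R * al - 2%:R * w0 * z0)); do 2 (split => //).
by rewrite kappa_inv_south /inversion_of; congr inversion_map; field.
Qed.

Lemma pseudo_spherical_kappa_inv (b : pt R) : inversion_point b -> left_right_ib b south south ->
  forall p P, pseudo_spherical b p P <-> kappa_inv b (proj_xy p) = Some (proj_xy P).
Proof.
move=> Hb Hlr p P; have [m [xi [eta [r [nm nN ->]]]]] := inversion_point_south Hb Hlr.
rewrite kappa_inv_south; apply: iff_trans (pseudo_spherical_south _ _ _ _ _ _) _.
exact: inversion_of_graph.
Qed.

Lemma kappa_sim_similarity (b : pt R) : similarity_point b -> left_right_sim b south south ->
  is_similarity (kappa_sim b).
Proof.
move=> Hb Hlr; have [xi [eta [r [nxi neta ->]]]] := similarity_point_south Hb Hlr.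
rewrite kappa_sim_south; exists (- (xi / eta)), (r / (2%:R * eta)).
by split => //; rewrite oppr_eq0 mulf_neq0 ?invr_eq0.
Qed.

Lemma kappa_sim_eq (b b' : pt R) :
  similarity_point b -> left_right_sim b south south ->
  similarity_point b' -> left_right_sim b' south south ->
  kappa_sim b = kappa_sim b' <-> same_proj_point b b'.
Proof.
move=> Hb Hlr Hb' Hlr'; split; last by case=> l [nl ->]; rewrite kappa_sim_scale.
have [xi [eta [r [_ neta ->]]]] := similarity_point_south Hb Hlr.
have [xi' [eta' [r' [_ neta' ->]]]] := similarity_point_south Hb' Hlr'.
rewrite !kappa_sim_south => /similarity_of_inj E.
by exists (eta' / eta); split; [rewrite mulf_neq0 ?invr_eq0 | exact: E].
Qed.

Lemma kappa_sim_onto (f : C -> C) : is_similarity f ->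
  exists b, similarity_point b /\ left_right_sim b south south /\ kappa_sim b = f.
Proof.
case=> al [ga [nal ->]]; have n2 : (2%:R : C) != 0 by rewrite pnatr_eq0.
have nal' : - al != 0 by rewrite oppr_eq0.
have [Hb Hlr] := south_pt_similarity_point (2%:R * ga) nal' (oner_neq0 C).
exists (south_pt 0 (- al) 1 (2%:R * ga)); do 2 (split => //).
rewrite kappa_sim_south /similarity_of divr1 opprK.
by have -> : 2%:R * ga / (2%:R * 1) = ga by field.
Qed.

Lemma pseudo_spherical_kappa_sim (b : pt R) : similarity_point b -> left_right_sim b south south ->
  forall p P, pseudo_spherical b p P <-> kappa_sim b (proj_xy p) = proj_xy P.
Proof.
move=> Hb Hlr p P; have [xi [eta [r [nxi neta ->]]]] := similarity_point_south Hb Hlr.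
rewrite kappa_sim_south; apply: iff_trans (pseudo_spherical_south _ _ _ _ _ _) _.
by rewrite mulr0 mul0r subr0; apply: similarity_of_graph.
Qed.

End Kappa.

Theorem mainTheorem2 (R : realType) :
  (exists kappa : pt R -> (R[i] -> option R[i]),
     (forall b, inversion_point b -> left_right_ib b (south R) (south R) ->
        is_inversion (kappa b)) /\
     (forall b b', inversion_point b -> left_right_ib b (south R) (south R) ->
        inversion_point b' -> left_right_ib b' (south R) (south R) ->
        (kappa b = kappa b' <-> same_proj_point b b')) /\
     (forall f, is_inversion f -> exists b, inversion_point b /\
        left_right_ib b (south R) (south R) /\ kappa b = f) /\
     (forall b, inversion_point b -> left_right_ib b (south R) (south R) ->
        forall p P : 'cV[R]_3,
          pseudo_spherical b p P <-> kappa b (proj_xy p) = Some (proj_xy P)))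
  /\
  (exists kappa : pt R -> (R[i] -> R[i]),
     (forall b, similarity_point b -> left_right_sim b (south R) (south R) ->
        is_similarity (kappa b)) /\
     (forall b b', similarity_point b -> left_right_sim b (south R) (south R) ->
        similarity_point b' -> left_right_sim b' (south R) (south R) ->
        (kappa b = kappa b' <-> same_proj_point b b')) /\
     (forall f, is_similarity f -> exists b, similarity_point b /\
        left_right_sim b (south R) (south R) /\ kappa b = f) /\
     (forall b, similarity_point b -> left_right_sim b (south R) (south R) ->
        forall p P : 'cV[R]_3,
          pseudo_spherical b p P <-> kappa b (proj_xy p) = proj_xy P)).
Proof.
split.
- exists (@kappa_inv R); split; [exact: kappa_inv_inversion | split; [exact: kappa_inv_eq | split]].
  + exact: kappa_inv_onto.
  + exact: pseudo_spherical_kappa_inv.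
- exists (@kappa_sim R); split; [exact: kappa_sim_similarity | split; [exact: kappa_sim_eq | split]].
  + exact: kappa_sim_onto.
  + exact: pseudo_spherical_kappa_sim.
Qed.
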